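(* Let $G$ be a connected graph. (1) If $\gamma_P(G) = \gamma(G)$, then $\gamma_P(G \Box P_n) = \gamma(G)$ for every path $P_n$ with $n\ge 1$ vertices. (2) If $\gamma_P(G) = Z(G)$ and $H$ is a connected graph with $\gamma(H) = 1$, then $\gamma_P(G \Box H) = Z(G)$. (3) If $H$ is a connected graph with $v_s(G) = \gamma(G)$ and $v_s(H) = Z(H)$, then $\gamma_P(G \Box H) = \gamma(G)Z(H)$.
   Context: $\gamma(G)$ is the domination number. Zero forcing: starting from an observed set, repeatedly any vertex that is the only unobserved neighbor of some observed vertex becomes observed; $Z(G)$ is the minimum size of a set that eventually observes all vertices. Power domination: for $S\subseteq V(G)$, first all vertices of $S$ and their neighbors are observed, then the zero forcing rule is applied repeatedly; $\gamma_P(G)$ is the minimum size of an $S$ that eventually observes all vertices. A strong support vertex is a vertex adjacent to at least two leaves; $v_s(G)$ is the number of strong support vertices of $G$. $P_n$ is the path on $n$ vertices. $G\Box H$ is the Cartesian product: vertex set $V(G)\times V(H)$, with $(g_1,h_1)\sim(g_2,h_2)$ iff ($g_1=g_2$ and $h_1h_2\in E(H)$) or ($h_1=h_2$ and $g_1g_2\in E(G)$). *)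

From mathcomp Require Import all_boot.
Set Implicit Arguments. Unset Strict Implicit. Unset Printing Implicit Defensive.

Section Graphs.
Variables (T : finType) (e : rel T).

Definition simple_graph : Prop := symmetric e /\ irreflexive e.

Definition connected_graph : Prop := 0 < #|T| /\ forall x y : T, connect e x y.

Definition closed_nbhd (S : {set T}) : {set T} :=
  S :|: [set y | [exists x in S, e x y]].

Definition dominating (S : {set T}) : bool := closed_nbhd S == setT.

Definition zf_step (S : {set T}) : {set T} :=
  S :|: [set v | [exists u in S,
           [&& e u v, v \notin S & [forall w, e u w ==> (w \in S) || (w == v)]]]].

(* the set of vertices eventually observed (the rule is monotone, so the
   result is independent of the order; #|T| rounds suffice) *)
Definition zf_closure (S : {set T}) : {set T} := iter #|T| zf_step S.

Definition zero_forcing_set (S : {set T}) : bool := zf_closure S == setT.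

Definition power_dominating (S : {set T}) : bool :=
  zf_closure (closed_nbhd S) == setT.

(* minimum sizes; setT always qualifies so #|T| is a valid upper default *)
Definition domination_number : nat :=
  \big[minn/#|T|]_(S : {set T} | dominating S) #|S|.
Definition zero_forcing_number : nat :=
  \big[minn/#|T|]_(S : {set T} | zero_forcing_set S) #|S|.
Definition power_domination_number : nat :=
  \big[minn/#|T|]_(S : {set T} | power_dominating S) #|S|.

Definition leaf (x : T) : bool := #|[set y | e x y]| == 1.
Definition strong_support (v : T) : bool := 1 < #|[set y | e v y & leaf y]|.
Definition num_strong_support : nat := #|[set v | strong_support v]|.

End Graphs.

Definition box_rel (T1 T2 : finType) (e1 : rel T1) (e2 : rel T2) : rel (T1 * T2) :=
  fun x y => ((x.1 == y.1) && e2 x.2 y.2) || ((x.2 == y.2) && e1 x.1 y.1).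

Definition path_rel (n : nat) : rel 'I_n :=
  fun i j => (i.+1 == j :> nat) || (j.+1 == i :> nat).
Arguments path_rel n : clear implicits.

From mathcomp Require Import all_boot.
Set Implicit Arguments. Unset Strict Implicit. Unset Printing Implicit Defensive.

(* Upper bounds: if [D] dominates [G] and [Z] is a zero forcing set of [H], then
   [D x Z] power dominates [G □ H], since domination observes the fibres over [Z]
   and the zero forcing process of [Z] then runs fibrewise; so
   gamma_P(G □ H) <= gamma(G) Z(H), and symmetrically <= Z(G) gamma(H), while
   Z(P_n) = 1.  Lower bounds: projecting a power dominating set of [G □ H] to [G]
   power dominates [G], and for strong support vertices [v], [w] the product of
   their leaf sets is a fort, which forces every power dominating set to meet the
   block ({v} + leaves v) x ({w} + leaves w); these blocks are pairwise disjoint,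
   so v_s(G) v_s(H) <= gamma_P(G □ H). *)

Section ExtensiveIteration.
Variables (T : finType) (f : {set T} -> {set T}).
Hypothesis f_ext : forall A : {set T}, A \subset f A.
Hypothesis f_mono : {homo f : A B / A \subset B}.
Implicit Types S F : {set T}.

Lemma sub_iter S k : S \subset iter k f S.
Proof. by elim: k => //= k IHk; apply: subset_trans IHk (f_ext _). Qed.

Lemma iter_sub_closed S F k : S \subset F -> f F \subset F -> iter k f S \subset F.
Proof. by move=> SF fF; elim: k => //= k IHk; apply: subset_trans (f_mono IHk) fF. Qed.

(* Each non-stationary step adds a vertex, so #|T| steps reach a fixed point. *)
Lemma iter_card_fixed S : f (iter #|T| f S) = iter #|T| f S.
Proof.
suff /'exists_eqP[k /= fk] : [exists k : 'I_#|T|.+1, f (iter k f S) == iter k f S].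
  by rewrite -(subnK (leq_ord k)) iterD (iter_fix _ fk).
apply: contraT => /existsPn neq.
suff grow j : j <= #|T|.+1 -> j <= #|iter j f S|.
  by have := grow _ (leqnn _); rewrite ltnNge max_card.
elim: j => // j IHj lt_j /=; apply: leq_ltn_trans (IHj (ltnW lt_j)) _.
by rewrite proper_card // properEneq f_ext andbT eq_sym (negbTE (neq (Ordinal lt_j))).
Qed.

End ExtensiveIteration.

Section ZeroForcing.
Variables (T : finType) (e : rel T).
Implicit Types (A B S F K : {set T}) (u v w x y : T).

(* Unlike [zf_step], [forces] does not require [v \notin A]; this is harmless. *)
Definition forces A u v : Prop :=
  [/\ u \in A, e u v & forall w, e u w -> w \in A \/ w = v].

Lemma zf_stepP A v : reflect (v \in A \/ exists u, forces A u v) (v \in zf_step e A).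
Proof.
apply: (iffP setUP) => [[vA|]|[vA|[u [uA euv uN]]]]; [by left | | by left |].
  rewrite inE => /existsP[u /and4P[uA euv _ /forallP uN]]; right; exists u.
  by split=> // w /(implyP (uN w)) /orP[|/eqP]; [left|right].
case vA: (v \in A); [by left | right]; rewrite inE.
apply/existsP; exists u; rewrite uA euv vA; apply/forallP => w; apply/implyP.
by case/uN => [->|->]; rewrite ?eqxx ?orbT.
Qed.

Lemma zf_step_ext A : A \subset zf_step e A.
Proof. exact: subsetUl. Qed.

Lemma forces_sub A B u v : A \subset B -> forces A u v -> forces B u v.
Proof.
move=> /subsetP AB [uA euv uN]; split; [exact: AB | by [] | move=> w /uN].
by case=> [/AB|]; [left|right].
Qed.

Lemma zf_step_mono : {homo zf_step e : A B / A \subset B}.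
Proof.
move=> A B AB; apply/subsetP => v /zf_stepP[/(subsetP AB)|[u /(forces_sub AB)]] vB.
  by apply/zf_stepP; left.
by apply/zf_stepP; right; exists u.
Qed.

Lemma zf_closure_sub S : S \subset zf_closure e S.
Proof. exact: (sub_iter zf_step_ext). Qed.

Lemma zf_closure_forces S u v : forces (zf_closure e S) u v -> v \in zf_closure e S.
Proof.
by move=> uv; rewrite /zf_closure -(iter_card_fixed zf_step_ext); apply/zf_stepP; right; exists u.
Qed.

Lemma zf_closure_min S F :
  S \subset F -> (forall u v, forces F u v -> v \in F) -> zf_closure e S \subset F.
Proof.
move=> SF Fclosed; apply: (iter_sub_closed zf_step_mono) SF _.
by apply/subsetP => v /zf_stepP[//|[u /Fclosed]].
Qed.

Lemma zf_closure_mono : {homo zf_closure e : A B / A \subset B}.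
Proof.
move=> A B AB; apply: zf_closure_min (subset_trans AB (zf_closure_sub B)) _.
exact: zf_closure_forces.
Qed.

Lemma closed_nbhdP S y :
  reflect (y \in S \/ exists2 x, x \in S & e x y) (y \in closed_nbhd e S).
Proof.
apply: (iffP setUP) => [[|]|[|[x xS exy]]]; [by left | | by left |].
  by rewrite inE => /existsP[x /andP[xS exy]]; right; exists x.
by right; rewrite inE; apply/existsP; exists x; rewrite xS.
Qed.

Lemma dominating_setT : dominating e setT.
Proof. by rewrite /dominating /closed_nbhd setTU. Qed.

Lemma zero_forcing_setT : zero_forcing_set e setT.
Proof. by rewrite /zero_forcing_set -subTset zf_closure_sub. Qed.

Lemma power_dominating_setT : power_dominating e setT.
Proof. by rewrite /power_dominating /closed_nbhd setTU -subTset zf_closure_sub. Qed.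

(* A fort (when nonempty): no vertex has exactly one neighbour in [K]. *)
Definition fort K : Prop :=
  forall u p, p \in K -> e u p -> exists2 q, q \in K & (q != p) && e u q.

Lemma zf_closure_fort S K : fort K -> S \subset ~: K -> zf_closure e S \subset ~: K.
Proof.
move=> fortK SK; apply: zf_closure_min SK _ => u p [_ eup uN]; rewrite inE; apply/negP => pK.
have [q qK /andP[qp euq]] := fortK u p pK eup.
by case: (uN q euq) => [|/eqP]; [rewrite inE qK | rewrite (negbTE qp)].
Qed.

Lemma power_dominating_fort S K :
  power_dominating e S -> fort K -> K != set0 -> ~~ (closed_nbhd e S \subset ~: K).
Proof.
move=> /eqP pdS fortK /set0Pn[p pK]; apply/negP => /(zf_closure_fort fortK).
by rewrite pdS => /subsetP/(_ p (in_setT p)); rewrite inE pK.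
Qed.

End ZeroForcing.

Section MinCard.
Variables (T : finType) (P : pred {set T}).
Implicit Type S : {set T}.

Lemma min_card_le S : P S -> \big[minn/#|T|]_(X | P X) #|X| <= #|S|.
Proof.
move=> PS; rewrite -big_filter; have : S \in [seq X <- index_enum _ | P X].
  by rewrite mem_filter PS mem_index_enum.
elim: (filter _ _) => //= X s IHs; rewrite inE big_cons.
by case/predU1P => [<-|/IHs le]; rewrite geq_min ?leqnn ?le ?orbT.
Qed.

Lemma min_card_attained :
  P setT -> exists2 S, P S & \big[minn/#|T|]_(X | P X) #|X| = #|S|.
Proof.
move=> PT; apply: (big_ind (fun m => exists2 S, P S & m = #|S|)).
- by exists setT; rewrite ?cardsT.
- move=> _ _ [S PS ->] [S' PS' ->]; case: (leqP #|S| #|S'|) => le.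
    by exists S; rewrite ?(minn_idPl le).
  by exists S'; rewrite ?(minn_idPr (ltnW le)).
- by move=> S PS; exists S.
Qed.

End MinCard.

Section Minimizers.
Variables (T : finType) (e : rel T).

Lemma domination_number_attained :
  exists2 D, dominating e D & domination_number e = #|D|.
Proof. exact: min_card_attained (dominating_setT e). Qed.

Lemma zero_forcing_number_attained :
  exists2 Z, zero_forcing_set e Z & zero_forcing_number e = #|Z|.
Proof. exact: min_card_attained (zero_forcing_setT e). Qed.

Lemma zero_forcing_number_le Z : zero_forcing_set e Z -> zero_forcing_number e <= #|Z|.
Proof. exact: min_card_le. Qed.

Lemma power_domination_number_attained :
  exists2 S, power_dominating e S & power_domination_number e = #|S|.
Proof. exact: min_card_attained (power_dominating_setT e). Qed.

Lemma power_domination_number_le S :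
  power_dominating e S -> power_domination_number e <= #|S|.
Proof. exact: min_card_le. Qed.

End Minimizers.

Section Isomorphism.
Variables (T U : finType) (e : rel T) (e' : rel U) (f : T -> U) (g : U -> T).
Hypotheses (fK : cancel f g) (gK : cancel g f).
Hypothesis f_iso : forall x y, e' (f x) (f y) = e x y.
Implicit Types (A S : {set T}).

Lemma closed_nbhd_imset S : f @: closed_nbhd e S \subset closed_nbhd e' (f @: S).
Proof.
apply/subsetP => _ /imsetP[y /closed_nbhdP[yS|[x xS exy]] ->]; apply/closed_nbhdP.
  by left; apply: imset_f.
by right; exists (f x); rewrite ?imset_f ?f_iso.
Qed.

Lemma zf_closure_imset A : f @: zf_closure e A \subset zf_closure e' (f @: A).
Proof.
rewrite sub_imset_pre; apply: zf_closure_min => [|u v [uF euv uN]].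
  by rewrite -sub_imset_pre zf_closure_sub.
rewrite inE in uF; rewrite inE; apply: (zf_closure_forces (u := f u)).
split=> [//|//|w']; first by rewrite f_iso.
by rewrite -[w']gK f_iso => /uN[]; [rewrite inE; left | move=> ->; right].
Qed.

Lemma power_dominating_imset S : power_dominating e S -> power_dominating e' (f @: S).
Proof.
rewrite /power_dominating -!subTset => /subsetP pdS; apply/subsetP => y _.
have /(subsetP (zf_closure_imset _)) := imset_f f (pdS (g y) (in_setT _)).
by rewrite gK; apply/subsetP/zf_closure_mono/closed_nbhd_imset.
Qed.

Lemma power_domination_number_iso :
  power_domination_number e' <= power_domination_number e.
Proof.
have [S pdS ->] := power_domination_number_attained e.
rewrite -(card_imset _ (can_inj fK)).
exact/power_domination_number_le/power_dominating_imset.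
Qed.

End Isomorphism.

Section CartesianProduct.
Variables (T T' : finType) (e : rel T) (e' : rel T').
Local Notation G := (box_rel e e').
Implicit Type S : {set T * T'}.

Lemma power_dominating_fst S : T' -> power_dominating G S -> power_dominating e (fst @: S).
Proof.
move=> y0 /eqP pdS; pose C := zf_closure e (closed_nbhd e (fst @: S)).
suff sub : zf_closure G (closed_nbhd G S) \subset fst @^-1: C.
  rewrite /power_dominating -subTset; apply/subsetP => x _.
  by have := subsetP sub (x, y0); rewrite pdS in_setT inE; apply.
apply: zf_closure_min => [|u v [uF /orP[/andP[/eqP u1v _]|/andP[/eqP u2v euv]] uN]].
- apply/subsetP => p /closed_nbhdP[pS|[q qS /orP[/andP[/eqP qp _]|/andP[_ eqp]]]];
    rewrite inE; apply: (subsetP (zf_closure_sub _ _)); apply/closed_nbhdP.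
  + by left; apply: imset_f.
  + by left; rewrite -qp; apply: imset_f.
  + by right; exists q.1; rewrite ?imset_f.
- by move: uF; rewrite !inE u1v.
rewrite inE in uF; rewrite inE; apply: (zf_closure_forces (u := u.1)); split=> // w euw.
have /uN : G u (w, u.2) by rewrite /box_rel /= eqxx euw orbT.
by case=> [|<-]; [rewrite inE; left | right].
Qed.

(* Domination observes every fibre [T * {z}] with [z \in Z]; then each zero forcing
   step of [e'] forces a whole fibre at once. *)
Lemma power_dominating_setX (D : {set T}) (Z : {set T'}) :
  dominating e D -> zero_forcing_set e' Z -> power_dominating G (setX D Z).
Proof.
move=> /eqP domD /eqP zfZ; pose C := zf_closure G (closed_nbhd G (setX D Z)).
suff sub : zf_closure e' Z \subset [set y | [forall x, (x, y) \in C]].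
  rewrite /power_dominating -subTset; apply/subsetP => -[x y] _.
  by have := subsetP sub y; rewrite zfZ in_setT inE => /(_ isT)/forallP; apply.
apply: zf_closure_min => [|u v [uF euv uN]].
  apply/subsetP => y yZ; rewrite inE; apply/forallP => x.
  apply: (subsetP (zf_closure_sub _ _)); apply/closed_nbhdP.
  have /closed_nbhdP[xD|[d dD edx]] : x \in closed_nbhd e D by rewrite domD.
    by left; rewrite in_setX xD.
  by right; exists (d, y); rewrite ?in_setX ?dD // /box_rel /= eqxx edx orbT.
rewrite inE; apply/forallP => x; apply: (zf_closure_forces (u := (x, u))).
split=> [|//|[w1 w2]]; first by move: uF; rewrite inE => /forallP.
  by rewrite /box_rel /= eqxx euv.
rewrite /box_rel /= => /orP[/andP[/eqP<- /uN[]]|/andP[/eqP<- _]].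
- by rewrite inE => /forallP; left.
- by move=> ->; right.
- by left; move: uF; rewrite inE => /forallP.
Qed.

Lemma power_domination_number_box_ge :
  T' -> power_domination_number e <= power_domination_number G.
Proof.
move=> y0; have [S pdS ->] := power_domination_number_attained G.
apply/(leq_trans _ (leq_imset_card _ _))/power_domination_number_le.
exact: power_dominating_fst y0 pdS.
Qed.

Lemma power_domination_number_box_le :
  power_domination_number G <= domination_number e * zero_forcing_number e'.
Proof.
have [D domD ->] := domination_number_attained e.
have [Z zfZ ->] := zero_forcing_number_attained e'.
by rewrite -cardsX; apply/power_domination_number_le/power_dominating_setX.
Qed.

End CartesianProduct.

Lemma power_domination_number_boxC (T T' : finType) (e : rel T) (e' : rel T') :
  power_domination_number (box_rel e e') = power_domination_number (box_rel e' e).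
Proof.
have swapK (A B : Type) : cancel (fun p : A * B => (p.2, p.1)) (fun p => (p.2, p.1)).
  by case.
have swap_box (A B : finType) (r : rel A) (r' : rel B) p q :
    box_rel r' r (p.2, p.1) (q.2, q.1) = box_rel r r' p q.
  by rewrite /box_rel orbC.
have iso := power_domination_number_iso (swapK _ _) (swapK _ _) (swap_box _ _ _ _).
by apply/eqP; rewrite eqn_leq !iso.
Qed.

Lemma leq_card_block_witnesses (I U : finType) (A : {set I}) (S : {set U})
    (B : I -> {set U}) :
  {in A, forall i, S :&: B i != set0} ->
  (forall i j x, i \in A -> j \in A -> x \in B i -> x \in B j -> i = j) ->
  #|A| <= #|S|.
Proof.
move=> meet B_inj; pose g i := [pick x in S :&: B i].
have gP i : i \in A -> exists2 x, g i = Some x & x \in S :&: B i.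
  by move=> /meet/set0Pn[y y_in]; rewrite /g; case: pickP => [x|/(_ y)]; [exists x|rewrite y_in].
have g_inj : {in A &, injective g}.
  move=> i j iA jA gij; have [x gi /setIP[_ xBi]] := gP i iA.
  have [y gj /setIP[_ yBj]] := gP j jA; move: gij; rewrite gi gj => -[xy].
  by rewrite -xy in yBj; apply: B_inj iA jA xBi yBj.
rewrite -(card_in_imset g_inj) -(card_imset S (@Some_inj _)); apply: subset_leq_card.
by apply/subsetP => _ /imsetP[i /gP[x -> /setIP[xS _]] ->]; apply: imset_f.
Qed.

Definition leaves (T : finType) (e : rel T) (v : T) : {set T} :=
  [set y | e v y & leaf e y].

Definition support_block (T : finType) (e : rel T) (v : T) : {set T} :=
  v |: leaves e v.

Lemma card_gt1_other (T : finType) (A : {set T}) x :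
  1 < #|A| -> exists2 y, y \in A & y != x.
Proof.
case/card_gt1P=> a [b [aA bA ab]]; case: (eqVneq a x) => [ax|]; last by exists a.
by exists b; rewrite // -ax eq_sym.
Qed.

Section Leaves.
Variables (T : finType) (e : rel T).
Hypothesis e_sym : symmetric e.

Lemma leaf_adj_eq x u v : leaf e x -> e u x -> e v x -> u = v.
Proof.
move=> /cards1P[z Nx] eux evx.
have : u \in [set y | e x y] by rewrite inE e_sym.
have : v \in [set y | e x y] by rewrite inE e_sym.
by rewrite Nx => /set1P-> /set1P->.
Qed.

Lemma strong_support_not_leaf v : strong_support e v -> ~~ leaf e v.
Proof.
apply: contraL => /eqP leaf_v; rewrite /strong_support -leqNgt -leaf_v.
by apply/subset_leq_card/subsetP => y; rewrite !inE => /andP[].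
Qed.

Lemma support_block_inj v v' x :
  strong_support e v -> strong_support e v' ->
  x \in support_block e v -> x \in support_block e v' -> v = v'.
Proof.
move=> sv sv'; rewrite !inE => /predU1P[->|/andP[evx lx]] /predU1P[xv'|/andP[ev'x lx']] //.
- by move: (strong_support_not_leaf sv); rewrite lx'.
- by move: (strong_support_not_leaf sv'); rewrite -xv' lx.
- exact: leaf_adj_eq lx evx ev'x.
Qed.

End Leaves.

Section StrongSupportBlocks.
Variables (T T' : finType) (e : rel T) (e' : rel T').
Hypotheses (e_sym : symmetric e) (e'_sym : symmetric e').
Local Notation G := (box_rel e e').
Variables (v : T) (w : T').
Hypotheses (sv : strong_support e v) (sw : strong_support e' w).

Lemma leaves_box_adj p q :
  p \in setX (leaves e v) (leaves e' w) -> G q p -> q = (v, p.2) \/ q = (p.1, w).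
Proof.
case: p q => [x y] [x' y']; rewrite in_setX !inE /box_rel /=.
case/andP=> /andP[evx lx] /andP[ewy ly] /orP[/andP[/eqP-> e'y'y]|/andP[/eqP-> ex'x]].
  by right; rewrite (leaf_adj_eq e'_sym ly e'y'y ewy).
by left; rewrite (leaf_adj_eq e_sym lx ex'x evx).
Qed.

Lemma leaves_box_fort : fort G (setX (leaves e v) (leaves e' w)).
Proof.
move=> q [x y] pK /(leaves_box_adj pK) /= [->|->]; move: pK; rewrite in_setX => /andP[xL yL].
  have [x' x'L x'x] := card_gt1_other x sv; exists (x', y); first by rewrite in_setX x'L.
  by move: x'L; rewrite inE xpair_eqE (negbTE x'x) /box_rel /= eqxx => /andP[-> _]; rewrite orbT.
have [y' y'L y'y] := card_gt1_other y sw; exists (x, y'); first by rewrite in_setX xL.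
by move: y'L; rewrite inE xpair_eqE (negbTE y'y) andbF /box_rel /= eqxx => /andP[-> _].
Qed.

Lemma power_dominating_meets_blocks S :
  power_dominating G S -> S :&: setX (support_block e v) (support_block e' w) != set0.
Proof.
move=> pdS; set K := setX (leaves e v) (leaves e' w).
have K0 : K != set0.
  have /card_gt0P[x xL] : 0 < #|leaves e v| by apply: ltnW.
  have /card_gt0P[y yL] : 0 < #|leaves e' w| by apply: ltnW.
  by apply/set0Pn; exists (x, y); rewrite in_setX xL.
have inB q : q.1 \in v |: leaves e v -> q.2 \in w |: leaves e' w ->
    q \in S -> q \in S :&: setX (support_block e v) (support_block e' w).
  by move=> q1 q2 qS; rewrite inE qS inE q1.
apply: contraNneq (power_dominating_fort pdS leaves_box_fort K0) => SB0.
apply/subsetP => p /closed_nbhdP[pS|[q qS Gqp]]; rewrite inE; apply/negP => pK;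
  have := pK; rewrite inE => /andP[p1L p2L].
  by move: (inB p (setU1r _ p1L) (setU1r _ p2L) pS); rewrite SB0 inE.
case: (leaves_box_adj pK Gqp) => qE; subst q.
  by move: (inB (v, p.2) (setU11 _ _) (setU1r _ p2L) qS); rewrite SB0 inE.
by move: (inB (p.1, w) (setU1r _ p1L) (setU11 _ _) qS); rewrite SB0 inE.
Qed.

End StrongSupportBlocks.

Lemma num_strong_support_mul_le (T T' : finType) (e : rel T) (e' : rel T') :
  symmetric e -> symmetric e' ->
  num_strong_support e * num_strong_support e' <= power_domination_number (box_rel e e').
Proof.
move=> e_sym e'_sym; have [S pdS ->] := power_domination_number_attained (box_rel e e').
rewrite /num_strong_support -cardsX.
apply: (leq_card_block_witnesses (B := fun p => setX (support_block e p.1) (support_block e' p.2))).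
  move=> [v w]; rewrite in_setX !inE => /andP[sv sw].
  exact: power_dominating_meets_blocks.
move=> [v w] [v' w'] [x y] /setXP[sv sw] /setXP[sv' sw'] /setXP[xv yw] /setXP[xv' yw'].
rewrite !inE in sv sw sv' sw'.
by rewrite (support_block_inj e_sym sv sv' xv xv') (support_block_inj e'_sym sw sw' yw yw').
Qed.

Lemma path_zero_forcing_number_le1 n : 0 < n -> zero_forcing_number (path_rel n) <= 1.
Proof.
move=> n_gt0; rewrite -(cards1 (Ordinal n_gt0)); apply: zero_forcing_number_le.
rewrite /zero_forcing_set -subTset; apply/subsetP => j _; set C := zf_closure _ _.
suff prefix k (i : 'I_n) : i <= k -> i \in C by apply: prefix j _ (leqnn j).
elim: k i => [|k IHk] i.
  rewrite leqn0 => /eqP i0; apply: (subsetP (zf_closure_sub _ _)).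
  by rewrite inE; apply/eqP/val_inj.
rewrite leq_eqVlt => /predU1P[ik|]; last exact: IHk.
have kn : k < n by apply: ltnW; rewrite -ik.
apply: (zf_closure_forces (u := Ordinal kn)); split=> [|//|w]; first exact: IHk.
  by rewrite /path_rel /= ik eqxx.
rewrite /path_rel /= => /orP[/eqP wk|/eqP wk]; last by left; apply: IHk; rewrite -wk.
by right; apply/val_inj; rewrite /= -wk ik.
Qed.

Theorem corollary3p9 (T : finType) (e : rel T) :
  simple_graph e -> connected_graph e ->
  (* (1) *)
  (power_domination_number e = domination_number e ->
     forall n : nat, 1 <= n ->
       power_domination_number (box_rel e (path_rel n)) = domination_number e)
  /\
  (* (2) *)
  (forall (T' : finType) (e' : rel T'),
     simple_graph e' -> connected_graph e' ->
     power_domination_number e = zero_forcing_number e ->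
     domination_number e' = 1 ->
     power_domination_number (box_rel e e') = zero_forcing_number e)
  /\
  (* (3) *)
  (forall (T' : finType) (e' : rel T'),
     simple_graph e' -> connected_graph e' ->
     num_strong_support e = domination_number e ->
     num_strong_support e' = zero_forcing_number e' ->
     power_domination_number (box_rel e e') =
       domination_number e * zero_forcing_number e').
Proof.
move=> [e_sym _] _; split; [|split].
- move=> pd_dom n n_gt0; apply/eqP; rewrite eqn_leq; apply/andP; split.
    apply: leq_trans (power_domination_number_box_le _ _) _.
    by rewrite -[leqRHS]muln1 leq_mul // path_zero_forcing_number_le1.
  by rewrite -pd_dom (power_domination_number_box_ge _ _ (Ordinal n_gt0)).
- move=> T' e' _ [/card_gt0P[y0 _] _] pd_zf dom1; apply/eqP; rewrite eqn_leq; apply/andP; split.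
    rewrite power_domination_number_boxC.
    by apply: leq_trans (power_domination_number_box_le _ _) _; rewrite dom1 mul1n.
  by rewrite -pd_zf (power_domination_number_box_ge _ _ y0).
- move=> T' e' [e'_sym _] _ ss_dom ss_zf; apply/eqP; rewrite eqn_leq.
  by rewrite power_domination_number_box_le -ss_dom -ss_zf num_strong_support_mul_le.
Qed.
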